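(* Let $X$ be a set, $E$ an equivalence relation on $X$, and $\tau_0\subseteq\tau_1\subseteq\cdots$ quasi-Polish topologies on $X$ such that for each $i$ the $E$-saturation of every $\tau_i$-open set is $\tau_i$-open. Let $\tau$ be the topology generated by $\bigcup_i\tau_i$. Then the map $h:(X,\tau)/\!/E\to\varprojlim_i(X,\tau_i)/\!/E$, $[x]_{\approx_E^\tau}\mapsto([x]_{\approx_E^{\tau_i}})_i$, is a homeomorphism.
   Context: For a topology $\sigma$ on $X$, $x\approx_E^\sigma y$ iff the $\sigma$-closures of $[x]_E$ and $[y]_E$ coincide, and $(X,\sigma)/\!/E:=X/{\approx_E^\sigma}$ with the quotient topology. For $i$, the maps $(X,\tau_{i+1})/\!/E\to(X,\tau_i)/\!/E$, $[x]_{\approx^{\tau_{i+1}}_E}\mapsto[x]_{\approx^{\tau_i}_E}$, form an inverse sequence; $\varprojlim_i(X,\tau_i)/\!/E$ is the set of compatible sequences in $\prod_i(X,\tau_i)/\!/E$ with the subspace of the product topology. ($\tau$ is quasi-Polish and also has the saturation property.) A quasi-Polish space is a space homeomorphic to a $\mathbf\Pi^0_2$ subset of $\mathbb S^{\mathbb N}$ with $\mathbb S$ the Sierpiński space. *)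

Definition setT (T : Type) := T -> Prop.

Definition is_topology (T : Type) (O : setT T -> Prop) : Prop :=
  O (fun _ => True) /\
  (forall F : setT T -> Prop, (forall U, F U -> O U) ->
     O (fun x => exists U, F U /\ U x)) /\
  (forall U V, O U -> O V -> O (fun x => U x /\ V x)).

Definition generated (T : Type) (G : setT T -> Prop) : setT T -> Prop :=
  fun A => forall O : setT T -> Prop, is_topology T O -> (forall B, G B -> O B) -> O A.

(* Sierpinski space S = bool with opens {}, {true}, bool; S^N = nat -> bool with the
   product topology, generated by the subbasic opens {f | f n = true}. *)
Definition SN_open : setT (nat -> bool) -> Prop :=
  generated (nat -> bool) (fun B => exists n, B = (fun f => f n = true)).

(* Pi^0_2 subsets of S^N (de Brecht): countable intersections of sets
   {x | x in U_n -> x in V_n}, U_n, V_n open. *)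
Definition Pi02_SN (P : setT (nat -> bool)) : Prop :=
  exists U V : nat -> setT (nat -> bool),
    (forall n, SN_open (U n)) /\ (forall n, SN_open (V n)) /\
    (forall x, P x <-> (forall n, U n x -> V n x)).

Definition quasi_polish (X : Type) (O : setT X -> Prop) : Prop :=
  exists (P : setT (nat -> bool)) (f : X -> (nat -> bool)),
    Pi02_SN P /\
    (forall x y, f x = f y -> x = y) /\
    (forall z, P z <-> exists x, f x = z) /\
    (forall A : setT X, O A <-> exists W, SN_open W /\ (forall x, A x <-> W (f x))).

Definition closure (X : Type) (O : setT X -> Prop) (A : setT X) : setT X :=
  fun z => forall U, O U -> U z -> exists w, U w /\ A w.

Section Quot.
Variables (X : Type) (E : X -> X -> Prop).

Definition Eclass (x : X) : setT X := fun y => E x y.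

Definition saturation (A : setT X) : setT X := fun x => exists y, E x y /\ A y.

Definition approx (O : setT X -> Prop) (x y : X) : Prop :=
  forall z, closure X O (Eclass x) z <-> closure X O (Eclass y) z.

Definition cls (O : setT X -> Prop) (x : X) : setT X := approx O x.

Definition Quot (O : setT X -> Prop) : Type := {C : setT X | exists x, C = cls O x}.

Definition mkQ (O : setT X -> Prop) (x : X) : Quot O :=
  exist _ (cls O x) (ex_intro _ x eq_refl).

Definition Quot_open (O : setT X -> Prop) : setT (Quot O) -> Prop :=
  fun U => O (fun x => U (mkQ O x)).

(* the inverse limit: compatible sequences for the maps [x]_{i+1} |-> [x]_i *)
Definition compatible (tau : nat -> setT X -> Prop) (c : forall i, Quot (tau i)) : Prop :=
  forall i, exists x, proj1_sig (c (S i)) = cls (tau (S i)) x /\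
                      proj1_sig (c i) = cls (tau i) x.

Definition Lim (tau : nat -> setT X -> Prop) : Type :=
  {c : forall i, Quot (tau i) | compatible tau c}.

(* subspace topology of the product topology: generated by the restrictions of the
   subbasic opens {c | c i in U}, U open in (X,tau_i)//E *)
Definition Lim_open (tau : nat -> setT X -> Prop) : setT (Lim tau) -> Prop :=
  generated (Lim tau) (fun B => exists i (U : setT (Quot (tau i))),
                Quot_open (tau i) U /\ B = (fun c => U (proj1_sig c i))).

Definition limpt (tau : nat -> setT X -> Prop) (x : X) : Lim tau :=
  exist _ (fun i => mkQ (tau i) x) (fun i => ex_intro _ x (conj eq_refl eq_refl)).

End Quot.

Definition homeomorphism (T1 T2 : Type) (O1 : setT T1 -> Prop) (O2 : setT T2 -> Prop)
  (h : T1 -> T2) : Prop :=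
  (forall a b, h a = h b -> a = b) /\
  (forall b, exists a, h a = b) /\
  (forall V, O2 V -> O1 (fun a => V (h a))) /\
  (forall U, O1 U -> O2 (fun b => exists a, U a /\ h a = b)).

(* The map is well defined, injective, continuous and open because x ≈^τ y holds iff
   x ≈^{τ_i} y for every i: each of these relations is determined by the saturated open
   sets containing a point, and every τ-open set is a union of τ_i-open sets.
   Surjectivity is the real content. A compatible sequence of classes K_0 ⊇ K_1 ⊇ ...
   has the property that every τ_k-open set meeting K_k meets K_{k+1}, so one can pick
   x_k ∈ K_k inside shrinking τ_k-open sets D_k. Let f_j embed (X, τ_j) as a Pi^0_2
   subset of S^N. Choosing D_{k+1} so that it freezes a cylinder neighbourhood of
   f_j(x_k) for the first k of countably many requirements, the codes f_j(x_k)
   converge to points z_j of the images of the f_j, all coded by one x, and the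
   requirements force x into every K_j. *)

From Stdlib Require Import Arith Lia Cantor Classical ClassicalEpsilon
  FunctionalExtensionality PropExtensionality ProofIrrelevance.

Lemma set_ext {T : Type} (A B : setT T) : (forall x, A x <-> B x) -> A = B.
Proof.
  intros H; apply functional_extensionality; intro x.
  apply propositional_extensionality, H.
Qed.

Lemma open_ext {T : Type} (O : setT T -> Prop) (A B : setT T) :
  O A -> (forall x, A x <-> B x) -> O B.
Proof. intros HA H; rewrite <- (set_ext A B H); exact HA. Qed.

Lemma bounded_exists_common (Q : nat -> nat -> Prop) (m : nat) :
  (forall r k k', k <= k' -> Q r k -> Q r k') ->
  (forall r, r <= m -> exists k, Q r k) ->
  exists k, forall r, r <= m -> Q r k.
Proof.
  intros Hmono H; induction m as [|m IH].
  - destruct (H 0 (le_n 0)) as [k Hk].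
    exists k; intros r Hr; replace r with 0 by lia; exact Hk.
  - destruct IH as [k1 Hk1]; [intros r Hr; apply H; lia|].
    destruct (H (S m) (le_n _)) as [k2 Hk2].
    exists (max k1 k2); intros r Hr.
    destruct (Nat.eq_dec r (S m)) as [->|Hne].
    + apply (Hmono _ k2); [lia | exact Hk2].
    + apply (Hmono _ k1); [lia | apply Hk1; lia].
Qed.

Section Topology.
Variables (T : Type) (O : setT T -> Prop).
Hypothesis O_top : is_topology T O.

Lemma open_full : O (fun _ => True).
Proof. apply O_top. Qed.

Lemma open_inter (A B : setT T) : O A -> O B -> O (fun x => A x /\ B x).
Proof. apply O_top. Qed.

Lemma open_local (A : setT T) :
  (forall x, A x -> exists B, O B /\ B x /\ forall y, B y -> A y) -> O A.
Proof.
  intros H.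
  apply (open_ext O (fun x => exists B, (O B /\ forall y, B y -> A y) /\ B x)).
  - apply O_top; tauto.
  - intro x; split.
    + intros [B [[_ HB] Bx]]; auto.
    + intros Ax; destruct (H x Ax) as [B [? [? ?]]]; exists B; tauto.
Qed.

Lemma open_guard (G : Prop) (A : setT T) : (G -> O A) -> O (fun x => G -> A x).
Proof.
  intros H; destruct (classic G) as [HG|HG].
  - apply (open_ext O A); [auto | tauto].
  - apply (open_ext O (fun _ => True)); [exact open_full | tauto].
Qed.

Lemma open_bounded_forall (m : nat) (A : nat -> setT T) :
  (forall r, r <= m -> O (A r)) -> O (fun x => forall r, r <= m -> A r x).
Proof.
  induction m as [|m IH]; intros H.
  - apply (open_ext O (A 0)); [apply H; lia|].
    intro x; split; [intros Hx r Hr; replace r with 0 by lia | intros Hx; apply Hx]; auto.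
  - apply (open_ext O (fun x => (forall r, r <= m -> A r x) /\ A (S m) x)).
    + apply open_inter; [apply IH; auto | apply H; lia].
    + intro x; split.
      * intros [H1 H2] r Hr; destruct (Nat.eq_dec r (S m)) as [->|]; auto with arith.
        apply H1; lia.
      * intros Hx; auto.
Qed.

End Topology.

Lemma generated_topology (T : Type) (G : setT T -> Prop) : is_topology T (generated T G).
Proof.
  split; [|split].
  - intros O HO _; apply open_full, HO.
  - intros F HF O HO HG; apply HO; intros U HU; apply HF; auto.
  - intros A B HA HB O HO HG; apply open_inter; [|apply HA|apply HB]; auto.
Qed.

Lemma generated_open (T : Type) (G : setT T -> Prop) (B : setT T) : G B -> generated T G B.
Proof. intros HB O _ HG; auto. Qed.

Lemma generated_preimage_open (T T' : Type) (O : setT T -> Prop) (G : setT T' -> Prop)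
  (g : T -> T') :
  is_topology T O -> (forall B, G B -> O (fun x => B (g x))) ->
  forall W, generated T' G W -> O (fun x => W (g x)).
Proof.
  intros HO HG W HW; apply (HW (fun W => O (fun x => W (g x)))); [split; [|split]|exact HG].
  - apply open_full, HO.
  - intros F HF; apply open_local; [exact HO|].
    intros x [B [FB Bx]]; exists (fun x => B (g x)); split; [auto|split; [auto|]].
    intros y By; exists B; auto.
  - intros A B HA HB; apply open_inter; auto.
Qed.

Lemma generated_basis (T : Type) (G Bs : setT T -> Prop) :
  (forall x, exists B, Bs B /\ B x) ->
  (forall B C x, Bs B -> Bs C -> B x -> C x ->
     exists D, Bs D /\ D x /\ forall y, D y -> B y /\ C y) ->
  (forall A, G A -> forall x, A x -> exists B, Bs B /\ B x /\ forall y, B y -> A y) ->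
  forall A, generated T G A ->
  forall x, A x -> exists B, Bs B /\ B x /\ forall y, B y -> A y.
Proof.
  intros Hcover Hinter HG A HA.
  apply (HA (fun A => forall x, A x -> exists B, Bs B /\ B x /\ forall y, B y -> A y));
    [split; [|split] | exact HG].
  - intros x _; destruct (Hcover x) as [B [? ?]]; exists B; auto.
  - intros F HF x [U [FU Ux]]; destruct (HF U FU x Ux) as [B [? [? HBU]]].
    exists B; split; [|split]; auto; intros y By; exists U; auto.
  - intros U V HU HV x [Ux Vx].
    destruct (HU x Ux) as [B [HB [Bx BU]]], (HV x Vx) as [C [HC [Cx CV]]].
    destruct (Hinter B C x HB HC Bx Cx) as [D [HD [Dx DBC]]].
    exists D; split; [|split]; auto; intros y Dy; destruct (DBC y Dy); auto.
Qed.

(* The binary digits of [c] code a finite set of coordinates; [cylinder c] is the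
   basic open subset of S^N where all of them are [true]. *)
Definition cylinder (c : nat) : setT (nat -> bool) :=
  fun w => forall n, Nat.testbit c n = true -> w n = true.

Lemma testbit_lt (c n : nat) : Nat.testbit c n = true -> n < c.
Proof.
  intros H; destruct (Nat.eq_dec c 0) as [->|Hc]; [rewrite Nat.bits_0 in H; discriminate|].
  destruct (le_lt_dec c n) as [Hle|]; [exfalso|lia].
  pose proof (Nat.log2_lt_lin c ltac:(lia)).
  rewrite Nat.bits_above_log2 in H; [discriminate | lia].
Qed.

Lemma SN_open_topology : is_topology _ SN_open.
Proof. apply generated_topology. Qed.

Lemma SN_open_coordinate (n : nat) : SN_open (fun w => w n = true).
Proof. apply generated_open; exists n; reflexivity. Qed.

Lemma cylinder_open (c : nat) : SN_open (cylinder c).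
Proof.
  apply (open_ext _ (fun w => forall n, n <= c -> Nat.testbit c n = true -> w n = true)).
  - apply open_bounded_forall; [exact SN_open_topology|].
    intros n _; apply open_guard; [exact SN_open_topology|].
    intros _; apply SN_open_coordinate.
  - intro w; split; intros H n; auto.
    intros Hn; apply H; [apply Nat.lt_le_incl, testbit_lt|]; auto.
Qed.

Lemma SN_open_cylinder_nbhd (W : setT (nat -> bool)) (w : nat -> bool) :
  SN_open W -> W w -> exists c, cylinder c w /\ forall w', cylinder c w' -> W w'.
Proof.
  intros HW Hw.
  assert (Hcover : forall x, exists B, (exists c, B = cylinder c) /\ B x).
  { intros x; exists (cylinder 0); split; [eauto|].
    intros n Hn; rewrite Nat.bits_0 in Hn; discriminate. }
  assert (Hinter : forall B C x, (exists b, B = cylinder b) -> (exists c, C = cylinder c) ->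
            B x -> C x -> exists D, (exists d, D = cylinder d) /\ D x /\
            forall y, D y -> B y /\ C y).
  { intros B C x [b ->] [c ->] Hb Hc; exists (cylinder (Nat.lor b c)); split; [eauto|].
    split.
    - intros n; rewrite Nat.lor_spec; intros Hn.
      apply Bool.orb_true_iff in Hn as [Hn|Hn]; auto.
    - intros y Hy; split; intros n Hn; apply Hy; rewrite Nat.lor_spec, Hn;
        auto using Bool.orb_true_r. }
  assert (Hsub : forall A, (exists n, A = fun f => f n = true) -> forall x, A x ->
            exists B, (exists c, B = cylinder c) /\ B x /\ forall y, B y -> A y).
  { intros A [n ->] x Hx; exists (cylinder (2 ^ n)); split; [eauto|].
    split.
    - intros m; rewrite Nat.pow2_bits_eqb; intros Hm; apply Nat.eqb_eq in Hm; subst; auto.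
    - intros y Hy; apply Hy, Nat.pow2_bits_true. }
  destruct (generated_basis _ _ _ Hcover Hinter Hsub W HW w Hw) as [B [[c ->] Hc]].
  exists c; exact Hc.
Qed.

Definition cylinder_nbhd (W : setT (nat -> bool)) (w : nat -> bool) : nat :=
  epsilon (inhabits 0) (fun c => cylinder c w /\ forall w', cylinder c w' -> W w').

Lemma cylinder_nbhd_spec (W : setT (nat -> bool)) (w : nat -> bool) :
  SN_open W -> W w ->
  cylinder (cylinder_nbhd W w) w /\ forall w', cylinder (cylinder_nbhd W w) w' -> W w'.
Proof.
  intros HW Hw.
  apply (epsilon_spec (inhabits 0)
           (fun c => cylinder c w /\ forall w', cylinder c w' -> W w')).
  apply SN_open_cylinder_nbhd; auto.
Qed.

Definition limit_bits {T : Type} (g : T -> nat -> bool) (D : nat -> setT T) : nat -> bool :=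
  fun n => if excluded_middle_informative (exists k, forall x, D k x -> g x n = true)
           then true else false.

Section LimitBits.
Variables (T : Type) (g : T -> nat -> bool) (D : nat -> setT T).
Hypothesis D_decr : forall k x, D (S k) x -> D k x.

Lemma decreasing_le k k' x : k <= k' -> D k' x -> D k x.
Proof. intros H; induction H; auto. Qed.

Lemma limit_bits_true n :
  limit_bits g D n = true <-> exists k, forall x, D k x -> g x n = true.
Proof.
  unfold limit_bits; destruct excluded_middle_informative; split; auto; discriminate.
Qed.

Lemma cylinder_limit_bits c :
  cylinder c (limit_bits g D) <-> exists k, forall x, D k x -> cylinder c (g x).
Proof.
  split.
  - intros Hc.
    destruct (bounded_exists_common
                (fun n k => Nat.testbit c n = true -> forall x, D k x -> g x n = true) c)
      as [k Hk].
    + intros n k k' Hkk' Hk Hn x Dx; apply Hk; [|apply (decreasing_le k k')]; auto.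
    + intros n _; destruct (Nat.testbit c n) eqn:Hn.
      * destruct (proj1 (limit_bits_true n) (Hc n Hn)) as [k Hk]; exists k; auto.
      * exists 0; discriminate.
    + exists k; intros x Dx n Hn; apply Hk; auto; apply Nat.lt_le_incl, testbit_lt; auto.
  - intros [k Hk] n Hn; apply limit_bits_true; exists k; intros x Dx; apply Hk; auto.
Qed.

Lemma open_limit_bits W :
  SN_open W -> W (limit_bits g D) -> exists k, forall x, D k x -> W (g x).
Proof.
  intros HW Hz; destruct (SN_open_cylinder_nbhd W _ HW Hz) as [c [Hc HcW]].
  destruct (proj1 (cylinder_limit_bits c) Hc) as [k Hk]; eauto.
Qed.

End LimitBits.

Section Quotient.
Variables (X : Type) (E : X -> X -> Prop).

Lemma approx_refl O x : approx X E O x x.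
Proof. intros z; tauto. Qed.

Lemma approx_sym O x y : approx X E O x y -> approx X E O y x.
Proof. intros H z; specialize (H z); tauto. Qed.

Lemma approx_trans O x y w : approx X E O x y -> approx X E O y w -> approx X E O x w.
Proof. intros H1 H2 z; specialize (H1 z); specialize (H2 z); tauto. Qed.

Lemma mkQ_eq_iff O x y : mkQ X E O x = mkQ X E O y <-> approx X E O x y.
Proof.
  split.
  - intros H; pose proof (f_equal (@proj1_sig _ _) H) as Hcls; simpl in Hcls.
    assert (Hy : cls X E O y y) by apply approx_refl.
    rewrite <- Hcls in Hy; exact Hy.
  - intros H; apply subset_eq_compat, set_ext; intro w; unfold cls; split;
      eauto using approx_trans, approx_sym.
Qed.

Lemma mkQ_surjective O (q : Quot X E O) : exists x, q = mkQ X E O x.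
Proof. destruct q as [C [x Hx]]; exists x; apply subset_eq_compat; exact Hx. Qed.

Definition quot_rep O (q : Quot X E O) : X :=
  proj1_sig (constructive_indefinite_description
               (fun x => proj1_sig q = cls X E O x) (proj2_sig q)).

Lemma mkQ_quot_rep O (q : Quot X E O) : mkQ X E O (quot_rep O q) = q.
Proof.
  unfold quot_rep; destruct constructive_indefinite_description as [x Hx]; simpl.
  destruct q as [C HC]; apply subset_eq_compat; simpl in Hx; auto.
Qed.

Lemma quotient_homeomorphism (O : setT X -> Prop) (T : Type) (OT : setT T -> Prop)
  (g : X -> T) :
  (forall x y, g x = g y <-> approx X E O x y) ->
  (forall t, exists x, g x = t) ->
  (forall W, OT W -> O (fun x => W (g x))) ->
  (forall A, O A -> OT (fun t => exists x, A x /\ g x = t)) ->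
  exists h : Quot X E O -> T,
    (forall x, h (mkQ X E O x) = g x) /\ homeomorphism _ _ (Quot_open X E O) OT h.
Proof.
  intros Hg_eq Hg_surj Hg_cont Hg_open.
  assert (Hh : forall x, g (quot_rep O (mkQ X E O x)) = g x).
  { intros x; apply Hg_eq, mkQ_eq_iff, mkQ_quot_rep. }
  exists (fun q => g (quot_rep O q)); split; [exact Hh|].
  split; [|split; [|split]].
  - intros a b Hab; rewrite <- (mkQ_quot_rep O a), <- (mkQ_quot_rep O b).
    apply mkQ_eq_iff, Hg_eq, Hab.
  - intros t; destruct (Hg_surj t) as [x <-]; exists (mkQ X E O x); apply Hh.
  - intros W HW; unfold Quot_open.
    apply (open_ext O (fun x => W (g x))); [auto|].
    intro x; rewrite Hh; tauto.
  - intros U HU; apply (open_ext OT _ _ (Hg_open _ HU)); intro t; split.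
    + intros [x [Ux <-]]; exists (mkQ X E O x); auto.
    + intros [q [Uq <-]]; exists (quot_rep O q); rewrite mkQ_quot_rep; auto.
Qed.

Hypothesis E_refl : forall x, E x x.
Hypothesis E_sym : forall x y, E x y -> E y x.
Hypothesis E_trans : forall x y z, E x y -> E y z -> E x z.

Lemma approx_of_E O x y : E x y -> approx X E O x y.
Proof.
  unfold approx, closure, Eclass; intros Hxy z; split; intros H U HU Uz;
    destruct (H U HU Uz) as [w [Uw Hw]]; exists w; eauto.
Qed.

Lemma saturation_approx O B x y :
  approx X E O x y -> O (saturation X E B) -> saturation X E B x -> saturation X E B y.
Proof.
  intros Hxy HB Hx.
  assert (Hc : closure X O (Eclass X E y) x).
  { apply (proj1 (Hxy x)); intros U _ Ux; exists x; split; [auto | apply E_refl]. }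
  destruct (Hc _ HB Hx) as [w [[u [Hwu Bu]] Hyw]]; exists u; split; [|exact Bu].
  exact (E_trans y w u Hyw Hwu).
Qed.

Lemma approx_of_saturation O x y :
  (forall B, O B -> (saturation X E B x <-> saturation X E B y)) -> approx X E O x y.
Proof.
  intros H z; split; intros Hz U HU Uz; destruct (Hz U HU Uz) as [w [Uw Hw]];
    [destruct (proj1 (H U HU) (ex_intro _ w (conj Hw Uw))) as [u [? ?]]
    |destruct (proj2 (H U HU) (ex_intro _ w (conj Hw Uw))) as [u [? ?]]];
    exists u; auto.
Qed.

End Quotient.

Definition join_topology (X : Type) (tau : nat -> setT X -> Prop) : setT X -> Prop :=
  generated X (fun A => exists i, tau i A).

Section Tower.
Variables (X : Type) (E : X -> X -> Prop).
Hypothesis E_refl : forall x, E x x.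
Hypothesis E_sym : forall x y, E x y -> E y x.
Hypothesis E_trans : forall x y z, E x y -> E y z -> E x z.
Variable tau : nat -> setT X -> Prop.
Hypothesis tau_top : forall i, is_topology X (tau i).
Hypothesis tau_incr : forall i A, tau i A -> tau (S i) A.
Hypothesis tau_sat : forall i A, tau i A -> tau i (saturation X E A).

Notation tinf := (join_topology X tau).

Lemma tau_mono i j A : i <= j -> tau i A -> tau j A.
Proof. intros H; induction H; auto. Qed.

Lemma join_topology_open i A : tau i A -> tinf A.
Proof. intros H; apply generated_open; exists i; exact H. Qed.

Lemma join_topology_basis A x :
  tinf A -> A x -> exists i B, tau i B /\ B x /\ forall y, B y -> A y.
Proof.
  intros HA Ax.
  assert (Hcover : forall y, exists B, (exists i, tau i B) /\ B y).
  { intros y; exists (fun _ => True); split; [exists 0; apply open_full, tau_top | auto]. }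
  assert (Hinter : forall B C y, (exists i, tau i B) -> (exists j, tau j C) -> B y -> C y ->
            exists D, (exists k, tau k D) /\ D y /\ forall y', D y' -> B y' /\ C y').
  { intros B C y [i HB] [j HC] By Cy; exists (fun y => B y /\ C y); split; [|auto].
    exists (max i j); apply open_inter; [apply tau_top | |];
      [apply (tau_mono i) | apply (tau_mono j)]; auto; lia. }
  assert (Hsub : forall B, (exists i, tau i B) -> forall y, B y ->
            exists B', (exists i, tau i B') /\ B' y /\ forall y', B' y' -> B y').
  { intros B HB y By; exists B; auto. }
  destruct (generated_basis X _ _ Hcover Hinter Hsub A HA x Ax) as [B [[i HB] HBA]].
  exists i, B; auto.
Qed.

Lemma approx_mono i j x y : i <= j -> approx X E (tau j) x y -> approx X E (tau i) x y.
Proof.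
  intros Hij H; apply approx_of_saturation; intros B HB; split; intros Hs;
    [apply (saturation_approx X E E_refl E_trans (tau j) B x y)
    |apply (saturation_approx X E E_refl E_trans (tau j) B y x); [apply approx_sym|..]];
    auto; apply (tau_mono i); auto.
Qed.

Lemma saturation_join_approx B x y :
  (forall i, approx X E (tau i) x y) -> tinf B -> saturation X E B x -> saturation X E B y.
Proof.
  intros Hxy HB [u [Exu Bu]].
  destruct (join_topology_basis B u HB Bu) as [i [B' [HB' [B'u B'B]]]].
  assert (Hy : saturation X E B' y).
  { apply (saturation_approx X E E_refl E_trans (tau i) B' x y); auto; exists u; auto. }
  destruct Hy as [v [Eyv B'v]]; exists v; auto.
Qed.

Lemma approx_join_iff x y : approx X E tinf x y <-> forall i, approx X E (tau i) x y.
Proof.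
  split.
  - intros H i; apply approx_of_saturation; intros B HB.
    assert (HsB : tinf (saturation X E B)) by (apply (join_topology_open i); auto).
    split; apply (saturation_approx X E E_refl E_trans tinf); auto using approx_sym.
  - intros H; apply approx_of_saturation; intros B HB; split;
      apply saturation_join_approx; auto using approx_sym.
Qed.

Lemma limpt_ext x (c : Lim X E tau) :
  (forall i, mkQ X E (tau i) x = proj1_sig c i) -> limpt X E tau x = c.
Proof.
  destruct c as [c Hc]; intros H; apply subset_eq_compat.
  apply functional_extensionality_dep; exact H.
Qed.

Lemma limpt_eq_iff x y : limpt X E tau x = limpt X E tau y <-> approx X E tinf x y.
Proof.
  rewrite approx_join_iff; split.
  - intros H i; apply mkQ_eq_iff; exact (f_equal (fun c => proj1_sig c i) H).
  - intros H; apply limpt_ext; intros i; apply mkQ_eq_iff, H.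
Qed.

Lemma limpt_continuous W : Lim_open X E tau W -> tinf (fun x => W (limpt X E tau x)).
Proof.
  apply generated_preimage_open; [apply generated_topology|].
  intros B [i [U [HU ->]]]; apply (join_topology_open i), HU.
Qed.

Lemma limpt_open A :
  (forall c, exists x, limpt X E tau x = c) ->
  tinf A -> Lim_open X E tau (fun c => exists x, A x /\ limpt X E tau x = c).
Proof.
  intros Hsurj HA; apply open_local; [apply generated_topology|].
  intros c [x [Ax <-]].
  destruct (join_topology_basis A x HA Ax) as [i [B [HB [Bx HBA]]]].
  set (V := fun q : Quot X E (tau i) =>
              exists y, q = mkQ X E (tau i) y /\ saturation X E B y).
  assert (HV : forall y, V (mkQ X E (tau i) y) -> saturation X E B y).
  { intros y [y' [Hyy' Hy']]; apply mkQ_eq_iff in Hyy'.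
    apply (saturation_approx X E E_refl E_trans (tau i) B y'); auto using approx_sym. }
  exists (fun c => V (proj1_sig c i)); split; [|split].
  - apply generated_open; exists i, V; split; [|reflexivity].
    unfold Quot_open; apply (open_ext _ (saturation X E B)); [auto|].
    intros y; split; [intros Hy; exists y; auto | apply HV].
  - exists x; split; [reflexivity|]; exists x; auto.
  - intros c Vc; destruct (Hsurj c) as [y <-].
    destruct (HV y Vc) as [u [Eyu Bu]].
    exists u; split; [auto|]; apply limpt_eq_iff, approx_of_E; auto.
Qed.

End Tower.

Record Pi02_embedding (X : Type) (O : setT X -> Prop) (f : X -> nat -> bool)
  (U V : nat -> setT (nat -> bool)) : Prop := {
  embedding_injective : forall x y, f x = f y -> x = y;
  embedding_U_open : forall n, SN_open (U n);
  embedding_V_open : forall n, SN_open (V n);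
  embedding_image : forall z, (exists x, f x = z) <-> forall n, U n z -> V n z;
  embedding_open : forall A, O A <-> exists W, SN_open W /\ forall x, A x <-> W (f x)
}.

Lemma quasi_polish_embeddings (X : Type) (tau : nat -> setT X -> Prop) :
  (forall i, quasi_polish X (tau i)) ->
  exists f U V, forall i, Pi02_embedding X (tau i) (f i) (U i) (V i).
Proof.
  intros Hqp.
  destruct (choice (fun i (fUV : (X -> nat -> bool) * (nat -> setT (nat -> bool)) *
                                 (nat -> setT (nat -> bool))) =>
                      let '(f, U, V) := fUV in Pi02_embedding X (tau i) f U V))
    as [g Hg].
  - intros i; destruct (Hqp i) as (P & f & (U & V & HU & HV & HP) & Hinj & Himg & Hopen).
    exists (f, U, V); split; auto.
    intros z; rewrite <- HP, Himg; reflexivity.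
  - exists (fun i => fst (fst (g i))), (fun i => snd (fst (g i))), (fun i => snd (g i)).
    intros i; specialize (Hg i); destruct (g i) as [[f U] V]; exact Hg.
Qed.

Lemma dependent_choice_nat {A : Type} (R : nat -> A -> A -> Prop) (a0 : A) :
  (forall n a, exists b, R n a b) ->
  exists s : nat -> A, s 0 = a0 /\ forall n, R n (s n) (s (S n)).
Proof.
  intros H; destruct (choice (fun (na : nat * A) b => R (fst na) (snd na) b)) as [g Hg].
  - intros [n a]; apply H.
  - exists (fix s n := match n with 0 => a0 | S n' => g (n', s n') end).
    split; [reflexivity|]; intros n; apply (Hg (n, _)).
Qed.

Lemma nested_sequence (X : Type) (tau : nat -> setT X -> Prop)
  (K : nat -> setT X) (C : nat -> X -> setT X) :
  (forall i, is_topology X (tau i)) ->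
  (forall i A, tau i A -> tau (S i) A) ->
  (exists x, K 0 x) ->
  (forall k x D, K k x -> D x -> tau k D -> exists x', D x' /\ K (S k) x') ->
  (forall k x, tau k (C k x) /\ C k x x) ->
  exists (xs : nat -> X) (Ds : nat -> setT X), forall k,
    K k (xs k) /\ Ds k (xs k) /\ tau k (Ds k) /\
    (forall x, Ds (S k) x -> Ds k x /\ C k (xs k) x).
Proof.
  intros tau_top tau_incr [x0 Kx0] Hdense HC.
  set (Inv := fun k (s : X * setT X) => K k (fst s) /\ snd s (fst s) /\ tau k (snd s)).
  destruct (dependent_choice_nat
              (fun k s s' => Inv k s -> Inv (S k) s' /\
                 forall x, snd s' x -> snd s x /\ C k (fst s) x)
              (x0, fun _ => True)) as [s [Hs0 Hstep]].
  - intros k [x D]; destruct (classic (Inv k (x, D))) as [[Kx [Dx HD]]|Hn];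
      [|exists (x, D); tauto].
    destruct (HC k x) as [HCo HCx].
    destruct (Hdense k x (fun y => D y /\ C k x y) Kx (conj Dx HCx))
      as [x' [Dx' Kx']]; [apply open_inter; auto|].
    exists (x', fun y => D y /\ C k x y); intros _; simpl.
    split; [split; [|split]|]; auto; apply tau_incr, open_inter; auto.
  - assert (HInv : forall k, Inv k (s k)).
    { induction k as [|k IH]; [rewrite Hs0; split; [|split]; simpl; auto|].
      - apply open_full, tau_top.
      - apply Hstep, IH. }
    exists (fun k => fst (s k)), (fun k => snd (s k)); intros k.
    destruct (HInv k) as (? & ? & ?); split; [|split; [|split]]; auto.
    apply Hstep, HInv.
Qed.

Section Surjectivity.
Variables (X : Type) (E : X -> X -> Prop).
Hypothesis E_refl : forall x, E x x.
Hypothesis E_sym : forall x y, E x y -> E y x.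
Hypothesis E_trans : forall x y z, E x y -> E y z -> E x z.
Variable tau : nat -> setT X -> Prop.
Hypothesis tau_top : forall i, is_topology X (tau i).
Hypothesis tau_incr : forall i A, tau i A -> tau (S i) A.
Hypothesis tau_sat : forall i A, tau i A -> tau i (saturation X E A).
Variables (f : nat -> X -> nat -> bool) (U V : nat -> nat -> setT (nat -> bool)).
Hypothesis f_emb : forall i, Pi02_embedding X (tau i) (f i) (U i) (V i).

Lemma preimage_open i W : SN_open W -> tau i (fun x => W (f i x)).
Proof. intros HW; apply (embedding_open _ _ _ _ _ (f_emb i)); exists W; tauto. Qed.

Definition open_code (i : nat) (A : setT X) : setT (nat -> bool) :=
  epsilon (inhabits (fun _ => True)) (fun W => SN_open W /\ forall x, A x <-> W (f i x)).

Lemma open_code_spec i A :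
  tau i A -> SN_open (open_code i A) /\ forall x, A x <-> open_code i A (f i x).
Proof.
  intros HA; apply (epsilon_spec _ (fun W => SN_open W /\ forall x, A x <-> W (f i x))).
  apply (embedding_open _ _ _ _ _ (f_emb i)), HA.
Qed.

(* Kind 0 puts the limit code into the Pi^0_2 image of [f a], kinds 1 and 2 make the
   codes at stages [a] and [S a] describe the same point, kind 3 (with [b] a cylinder
   index) keeps the limit point in the prescribed classes. *)
Definition requirement_of (kind a b : nat) : nat * setT (nat -> bool) :=
  match kind with
  | 0 => (a, V a b)
  | 1 => (a, fun w => w b = true)
  | 2 => (S a, open_code (S a) (fun x => f a x b = true))
  | _ => (a, open_code a (saturation X E (fun x => cylinder b (f a x))))
  end.

Definition requirement (r : nat) : nat * setT (nat -> bool) :=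
  let '(kind, ab) := Cantor.of_nat r in
  let '(a, b) := Cantor.of_nat ab in requirement_of kind a b.

Lemma requirement_index kind a b :
  requirement (Cantor.to_nat (kind, Cantor.to_nat (a, b))) = requirement_of kind a b.
Proof. unfold requirement; rewrite !Cantor.cancel_of_to; reflexivity. Qed.

Lemma requirement_open r : SN_open (snd (requirement r)).
Proof.
  unfold requirement; destruct (Cantor.of_nat r) as [kind ab], (Cantor.of_nat ab) as [a b].
  destruct kind as [|[|[|kind]]]; simpl.
  - apply (embedding_V_open _ _ _ _ _ (f_emb a)).
  - apply SN_open_coordinate.
  - apply open_code_spec, tau_incr, (preimage_open a (fun w => w b = true)).
    apply SN_open_coordinate.
  - apply open_code_spec, tau_sat, preimage_open, cylinder_open.
Qed.

Definition refinement (k : nat) (x0 : X) : setT X :=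
  fun x => forall r, r <= k ->
    let '(j, W) := requirement r in
    j <= k -> W (f j x0) -> cylinder (cylinder_nbhd W (f j x0)) (f j x).

Lemma refinement_open k x0 : tau k (refinement k x0).
Proof.
  unfold refinement; apply open_bounded_forall; [apply tau_top|]; intros r _.
  destruct (requirement r) as [j W].
  apply open_guard; [apply tau_top|]; intros Hjk.
  apply open_guard; [apply tau_top|]; intros _.
  apply (tau_mono X tau tau_incr j); [exact Hjk|].
  apply preimage_open, cylinder_open.
Qed.

Lemma refinement_self k x0 : refinement k x0 x0.
Proof.
  intros r _; pose proof (requirement_open r) as HW.
  destruct (requirement r) as [j W]; intros _ Hx0.
  apply cylinder_nbhd_spec; auto.
Qed.

Section LimitPoint.
Variables (xs : nat -> X) (Ds : nat -> setT X).
Hypothesis xs_in_Ds : forall k, Ds k (xs k).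
Hypothesis Ds_refine : forall k x, Ds (S k) x -> Ds k x /\ refinement k (xs k) x.

Lemma Ds_decr k x : Ds (S k) x -> Ds k x.
Proof. apply Ds_refine. Qed.

Definition limit_code (j : nat) : nat -> bool := limit_bits (f j) Ds.

Lemma limit_code_eventually j W :
  SN_open W -> W (limit_code j) -> exists k0, forall k, k0 <= k -> W (f j (xs k)).
Proof.
  intros HW Hz; destruct (open_limit_bits X (f j) Ds Ds_decr W HW Hz) as [k0 Hk0].
  exists k0; intros k Hk; apply Hk0, (decreasing_le X Ds Ds_decr k0 k); auto.
Qed.

Lemma requirement_met kind a b j W :
  requirement_of kind a b = (j, W) ->
  (exists k0, forall k, k0 <= k -> W (f j (xs k))) -> W (limit_code j).
Proof.
  intros Hreq [k0 Hk0].
  set (r := Cantor.to_nat (kind, Cantor.to_nat (a, b))).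
  set (k := max k0 (max r j)).
  assert (HW : SN_open W).
  { pose proof (requirement_open r) as Hr; unfold r in Hr.
    rewrite requirement_index, Hreq in Hr; exact Hr. }
  destruct (cylinder_nbhd_spec W (f j (xs k)) HW) as [_ Hnbhd]; [apply Hk0; lia|].
  apply Hnbhd, (cylinder_limit_bits X (f j) Ds Ds_decr); exists (S k); intros x Hx.
  destruct (Ds_refine k x Hx) as [_ Hrefine].
  specialize (Hrefine r ltac:(lia)); unfold r in Hrefine.
  rewrite requirement_index, Hreq in Hrefine; apply Hrefine; [lia | apply Hk0; lia].
Qed.

Lemma limit_code_in_image i : exists x, f i x = limit_code i.
Proof.
  apply (embedding_image _ _ _ _ _ (f_emb i)); intros n HU.
  apply (requirement_met 0 i n); [reflexivity|].
  destruct (limit_code_eventually i (U i n)) as [k0 Hk0];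
    [apply (embedding_U_open _ _ _ _ _ (f_emb i)) | exact HU|].
  exists k0; intros k Hk.
  apply (embedding_image _ _ _ _ _ (f_emb i)); [exists (xs k); reflexivity | auto].
Qed.

Lemma limit_code_compatible i y : f (S i) y = limit_code (S i) -> f i y = limit_code i.
Proof.
  intros Hy; apply functional_extensionality; intros n.
  set (A := fun x => f i x n = true).
  assert (HA : tau (S i) A) by apply tau_incr, (preimage_open i (fun w => w n = true)),
                                     SN_open_coordinate.
  destruct (open_code_spec (S i) A HA) as [Hcode_open Hcode].
  apply Bool.eq_true_iff_eq; split; intros Hn.
  - apply (requirement_met 1 i n); [reflexivity|].
    apply (Hcode y) in Hn; rewrite Hy in Hn.
    destruct (limit_code_eventually (S i) _ Hcode_open Hn) as [k0 Hk0].
    exists k0; intros k Hk; apply Hcode, Hk0, Hk.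
  - apply (Hcode y); rewrite Hy.
    apply (requirement_met 2 i n); [reflexivity|].
    destruct (limit_code_eventually i (fun w => w n = true) (SN_open_coordinate n) Hn)
      as [k0 Hk0].
    exists k0; intros k Hk; apply Hcode, Hk0, Hk.
Qed.

Lemma limit_point : exists x, forall j, f j x = limit_code j.
Proof.
  destruct (limit_code_in_image 0) as [x Hx]; exists x; intros j.
  induction j as [|j IH]; [exact Hx|].
  destruct (limit_code_in_image (S j)) as [y Hy].
  assert (Hyx : f j y = f j x) by (rewrite IH; apply limit_code_compatible; auto).
  apply (embedding_injective _ _ _ _ _ (f_emb j)) in Hyx; subst; exact Hy.
Qed.

Lemma approx_limit_point x y j :
  (forall i, f i x = limit_code i) ->
  (forall k, j <= k -> approx X E (tau j) y (xs k)) -> approx X E (tau j) y x.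
Proof.
  intros Hx Hy; apply approx_of_saturation; intros B HB; split.
  - intros [u [Eyu Bu]].
    destruct (proj1 (embedding_open _ _ _ _ _ (f_emb j) B) HB) as [W [HW HBW]].
    destruct (SN_open_cylinder_nbhd W (f j u) HW (proj1 (HBW u) Bu)) as [c [Hcu HcW]].
    set (Sc := saturation X E (fun x => cylinder c (f j x))).
    assert (HSc : tau j Sc) by apply tau_sat, (preimage_open j (cylinder c)), cylinder_open.
    destruct (open_code_spec j Sc HSc) as [_ Hcode].
    assert (HxSc : Sc x).
    { apply Hcode; rewrite Hx; apply (requirement_met 3 j c); [reflexivity|].
      exists j; intros k Hk; apply Hcode.
      apply (saturation_approx X E E_refl E_trans (tau j) _ y); auto.
      exists u; auto. }
    destruct HxSc as [u' [Exu' Hcu']]; exists u'; split; auto.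
    apply HBW, HcW, Hcu'.
  - intros Hxs.
    destruct (open_code_spec j _ (tau_sat j B HB)) as [Hcode_open Hcode].
    apply Hcode in Hxs; rewrite Hx in Hxs.
    destruct (limit_code_eventually j _ Hcode_open Hxs) as [k0 Hk0].
    apply (saturation_approx X E E_refl E_trans (tau j) B (xs (max k0 j)));
      [apply approx_sym, Hy; lia | apply tau_sat, HB |].
    apply Hcode, Hk0; lia.
Qed.

End LimitPoint.

Section CompatibleSequence.
Variable c : Lim X E tau.

Definition stage_class (k : nat) : setT X := proj1_sig (proj1_sig c k).

Lemma stage_class_succ k x : stage_class (S k) x -> stage_class k x.
Proof.
  destruct (proj2_sig c k) as [y [HSk Hk]]; unfold stage_class; rewrite HSk, Hk.
  apply (approx_mono X E E_refl E_trans tau tau_incr); auto.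
Qed.

Lemma stage_class_le j k x : j <= k -> stage_class k x -> stage_class j x.
Proof. intros H; induction H; auto using stage_class_succ. Qed.

Lemma stage_class_dense k x D :
  stage_class k x -> D x -> tau k D -> exists x', D x' /\ stage_class (S k) x'.
Proof.
  destruct (proj2_sig c k) as [y [HSk Hk]]; unfold stage_class; rewrite HSk, Hk.
  intros Hyx Dx HD.
  destruct (saturation_approx X E E_refl E_trans (tau k) D x y) as [u [Eyu Du]];
    [apply approx_sym, Hyx | apply tau_sat, HD | exists x; auto |].
  exists u; split; [exact Du | apply approx_of_E; auto].
Qed.

End CompatibleSequence.

Lemma limpt_surjective (c : Lim X E tau) : exists x, limpt X E tau x = c.
Proof.
  destruct (nested_sequence X tau (stage_class c) refinement tau_top tau_incr)
    as (xs & Ds & Hseq).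
  - destruct (mkQ_surjective X E _ (proj1_sig c 0)) as [y Hy].
    exists y; unfold stage_class; rewrite Hy; apply approx_refl.
  - apply stage_class_dense.
  - intros k x; split; [apply refinement_open | apply refinement_self].
  - assert (Hxs : forall k, Ds k (xs k)) by apply Hseq.
    assert (HDs : forall k x, Ds (S k) x -> Ds k x /\ refinement k (xs k) x) by apply Hseq.
    destruct (limit_point xs Ds Hxs HDs) as [x Hx]; exists x.
    apply (limpt_ext X E tau); intros j.
    destruct (mkQ_surjective X E _ (proj1_sig c j)) as [y Hy]; rewrite Hy.
    apply mkQ_eq_iff, approx_sym, (approx_limit_point xs Ds Hxs HDs); auto.
    intros k Hk; pose proof (stage_class_le c j k (xs k) Hk (proj1 (Hseq k))) as Hj.
    unfold stage_class in Hj; rewrite Hy in Hj; exact Hj.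
Qed.

End Surjectivity.

Theorem lemma2p5 (X : Type) (E : X -> X -> Prop)
  (E_refl : forall x, E x x)
  (E_sym : forall x y, E x y -> E y x)
  (E_trans : forall x y z, E x y -> E y z -> E x z)
  (tau : nat -> setT X -> Prop)
  (tau_top : forall i, is_topology X (tau i))
  (tau_qp : forall i, quasi_polish X (tau i))
  (tau_incr : forall i A, tau i A -> tau (S i) A)
  (tau_sat : forall i A, tau i A -> tau i (saturation X E A)) :
  let tinf := generated X (fun A => exists i, tau i A) in
  exists h : Quot X E tinf -> Lim X E tau,
    (forall x, h (mkQ X E tinf x) = limpt X E tau x) /\
    homeomorphism _ _ (Quot_open X E tinf) (Lim_open X E tau) h.
Proof.
  intros tinf; change tinf with (join_topology X tau).
  destruct (quasi_polish_embeddings X tau tau_qp) as (f & U & V & Hemb).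
  assert (Hsurj : forall c, exists x, limpt X E tau x = c)
    by exact (limpt_surjective X E E_refl E_sym E_trans tau tau_top tau_incr tau_sat
                f U V Hemb).
  apply quotient_homeomorphism.
  - intros x y; apply (limpt_eq_iff X E E_refl E_trans tau tau_top tau_incr tau_sat).
  - exact Hsurj.
  - apply (limpt_continuous X E tau).
  - intros A HA; apply limpt_open; auto.
Qed.
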